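(* Let $G$ be a path-connected $H$-space and let $f,g\colon G\times G\to G$ be continuous maps. Then $\mathrm{D}(f,g)\leq \mathrm{cat}(G)$.
   Context: An $H$-space is a topological space $G$ together with continuous maps $\mu\colon G\times G\to G$ (multiplication) and $\delta\colon G\times G\to G$ (division) and an element $x_0\in G$ such that the map $G\times G\to G$, $(x,y)\mapsto \mu(x,\delta(x,y))$, is homotopic to the second projection $p_2$, and the map $x\mapsto\mu(x,x_0)$ is homotopic to $\mathrm{id}_G$ (associativity is not required). For continuous maps $f,g\colon X\to Y$, the homotopic distance $\mathrm{D}(f,g)$ is the least integer $n\geq 0$ such that there is an open cover $\{U_0,\dots,U_n\}$ of $X$ with $f|_{U_j}\simeq g|_{U_j}$ for all $j$ ($\infty$ if none exists). For a path-connected space $X$, $\mathrm{cat}(X)$ is the least integer $n\geq 0$ such that $X$ can be covered by $n+1$ open sets whose inclusions into $X$ are null-homotopic. *)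

From HB Require Import structures.
From mathcomp Require Import all_boot all_order all_algebra.
From mathcomp Require Import all_classical all_reals all_analysis.
From mathcomp Require Import Rstruct Rstruct_topology.
From Stdlib Require Import Rdefinitions.

Set Implicit Arguments.
Unset Strict Implicit.
Unset Printing Implicit Defensive.

Import Order.TTheory GRing.Theory Num.Theory.
Local Open Scope classical_set_scope.
Local Open Scope ring_scope.

Definition unitI : set R := `[0%R, 1%R]%classic.

Definition homotopic_on {X Y : topologicalType} (U : set X) (f g : X -> Y) : Prop :=
  exists H : X * R -> Y,
    {within U `*` unitI, continuous H} /\
    (forall x, U x -> H (x, 0%R) = f x /\ H (x, 1%R) = g x).

Definition homotopic {X Y : topologicalType} (f g : X -> Y) : Prop :=
  homotopic_on setT f g.

Definition incl_nullhomotopic {X : topologicalType} (U : set X) : Prop :=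
  exists c : X, homotopic_on U idfun (fun _ => c).

Definition path_connected (X : topologicalType) : Prop :=
  (exists x : X, True) /\
  forall x y : X, exists p : R -> X,
    {within unitI, continuous p} /\ p 0%R = x /\ p 1%R = y.

Definition is_Hspace (G : topologicalType) (mu delta : G * G -> G) (x0 : G) : Prop :=
  continuous mu /\ continuous delta /\
  homotopic (fun p : G * G => mu (p.1, delta (p.1, p.2))) (fun p => p.2) /\
  homotopic (fun x : G => mu (x, x0)) idfun.

(* extended naturals: None stands for infinity *)
Definition ole (a b : option nat) : Prop :=
  match a, b with
  | _, None => True
  | None, Some _ => False
  | Some m, Some n => leq m n
  end.

Definition hdist_le {X Y : topologicalType} (f g : X -> Y) (n : nat) : Prop :=
  exists U : nat -> set X,
    (forall j, leq j n -> open (U j)) /\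
    (forall x, exists2 j, leq j n & U j x) /\
    (forall j, leq j n -> homotopic_on (U j) f g).

Definition cat_le (X : topologicalType) (n : nat) : Prop :=
  exists U : nat -> set X,
    (forall j, leq j n -> open (U j)) /\
    (forall x, exists2 j, leq j n & U j x) /\
    (forall j, leq j n -> incl_nullhomotopic (U j)).

Lemma asbool_ex (P : nat -> Prop) : (exists n, P n) -> exists n, `[< P n >].
Proof. by case=> n Pn; exists n; apply/asboolP. Qed.

Definition least_ext (P : nat -> Prop) : option nat :=
  match pselect (exists n, P n) with
  | left h => Some (ex_minn (asbool_ex h))
  | right _ => None
  end.

Definition hdist {X Y : topologicalType} (f g : X -> Y) : option nat :=
  least_ext (hdist_le f g).

Definition LScat (X : topologicalType) : option nat := least_ext (cat_le X).

From mathcomp Require Import all_boot all_order all_algebra.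
From mathcomp Require Import all_classical all_reals all_analysis.
From mathcomp Require Import Rstruct Rstruct_topology lra.
From Stdlib Require Import Rdefinitions.

(* Pull back a categorical cover U_0, ..., U_n of G along phi := delta (f, g).
   On phi^-1 (U_j) the map phi is homotopic to a constant, which by
   path-connectedness may be taken to be x0; there
   f ~ mu (f, x0) ~ mu (f, phi) ~ g, the last step being the H-space
   homotopy mu (x, delta (x, y)) ~ y. *)

Set Implicit Arguments.
Unset Strict Implicit.
Unset Printing Implicit Defensive.

Import Order.TTheory GRing.Theory Num.Theory.
Local Open Scope classical_set_scope.
Local Open Scope ring_scope.

Lemma continuous_pair {A B C : topologicalType} (a : A -> B) (b : A -> C) :
  continuous a -> continuous b -> continuous (fun q => (a q, b q)).
Proof. by move=> ca cb x; apply: cvg_pair; [exact: ca|exact: cb]. Qed.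

Lemma continuous_fst {A B : topologicalType} : continuous (@fst A B).
Proof. by move=> [x y]; exact: cvg_fst. Qed.

Lemma continuous_snd {A B : topologicalType} : continuous (@snd A B).
Proof. by move=> [x y]; exact: cvg_snd. Qed.

Lemma continuous_affine_snd {X : topologicalType} (a b : R) :
  continuous (fun q : X * R => (q.1, a * q.2 + b)).
Proof.
have aff : continuous (fun t : R => a * t + b).
  move=> t; apply: (@continuousD R R^o _ (fun t : R => a * t) (fun _ => b)).
    by apply: (@continuousM _ _ (fun _ => a) id); [exact: cvg_cst|exact: cvg_id].
  exact: cvg_cst.
apply: continuous_pair; first exact: continuous_fst.
move=> q; apply: (continuous_comp (f := snd) (g := fun t => a * t + b)).
  exact: continuous_snd.
exact: aff.
Qed.

Lemma continuous_map_fst {A A' B : topologicalType} (k : A -> A') :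
  continuous k -> continuous (fun q : A * B => (k q.1, q.2)).
Proof.
move=> ck; apply: continuous_pair; last exact: continuous_snd.
by move=> q; apply: continuous_comp (ck _); exact: continuous_fst.
Qed.

Lemma within_continuous_comp_mapsto {A B C : topologicalType}
    (S : set A) (S' : set B) (k : A -> B) (h : B -> C) :
  {within S, continuous k} -> (forall x, S x -> S' (k x)) ->
  {within S', continuous h} -> {within S, continuous (h \o k)}.
Proof.
move=> /subspace_continuousP ck kS /subspace_continuousP ch.
apply/subspace_continuousP => x Sx; apply: cvg_trans (ch _ (kS _ Sx)).
move=> W; rewrite /= !nbhs_simpl /= => /(ck _ Sx).
rewrite /= !nbhs_simpl /within /=.
by apply: filterS => z Wkz Sz; exact: Wkz Sz (kS _ Sz).
Qed.

Lemma nbhs_within_closed {T U : topologicalType} (S A : set T) (f : T -> U) x W :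
  closed A -> {within S `&` A, continuous f} -> S x -> nbhs (f x) W ->
  nbhs x (fun y => S y -> A y -> W (f y)).
Proof.
move=> cA /subspace_continuousP cf Sx fxW.
have [Ax|nAx] := pselect (A x).
  have := cf x (conj Sx Ax) _ fxW; rewrite /= !nbhs_simpl /= /within /=.
  by apply: filterS => y Wfy Sy Ay; exact: Wfy (conj Sy Ay).
have : nbhs x (~` A) by apply: open_nbhs_nbhs; split => //; exact: closed_openC.
by apply: filterS => y nAy _ Ay.
Qed.

(* Unlike in [withinU_continuous], the closed sets need not be contained in S. *)
Lemma within_continuous_closed_cover {T U : topologicalType} (S A B : set T)
    (f : T -> U) :
  closed A -> closed B -> S `<=` A `|` B ->
  {within S `&` A, continuous f} -> {within S `&` B, continuous f} ->
  {within S, continuous f}.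
Proof.
move=> cA cB SAB cfA cfB; apply/subspace_continuousP => x Sx W fxW.
rewrite /= !nbhs_simpl /= /within /=.
apply: filterS2 (nbhs_within_closed cA cfA Sx fxW)
  (nbhs_within_closed cB cfB Sx fxW).
by move=> y WA WB Sy; case: (SAB _ Sy) => [/(WA Sy)|/(WB Sy)].
Qed.

Lemma unitIE (t : R) : unitI t = (0 <= t <= 1).
Proof. by rewrite /unitI /= in_itv. Qed.

Lemma closed_snd_le {X : topologicalType} (c : R) :
  closed [set q : X * R | q.2 <= c].
Proof. exact: (continuous_closedP _).1 continuous_snd _ (@closed_le _ (c : R^o)). Qed.

Lemma closed_snd_ge {X : topologicalType} (c : R) :
  closed [set q : X * R | c <= q.2].
Proof. exact: (continuous_closedP _).1 continuous_snd _ (@closed_ge _ (c : R^o)). Qed.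

Section Homotopy.
Context {X Y : topologicalType}.
Implicit Types (U : set X) (f g h : X -> Y).

Lemma within_continuous_reparam U (H : X * R -> Y) (S : set (X * R)) (a b : R) :
  {within U `*` unitI, continuous H} ->
  (forall q, S q -> U q.1 /\ unitI (a * q.2 + b)) ->
  {within S, continuous (fun q => H (q.1, a * q.2 + b))}.
Proof.
move=> cH SU; apply: (within_continuous_comp_mapsto (S' := U `*` unitI)) => //.
exact/continuous_subspaceT/continuous_affine_snd.
Qed.

Lemma homotopic_on_sym U f g : homotopic_on U f g -> homotopic_on U g f.
Proof.
move=> [H [cH Hfg]]; exists (fun q => H (q.1, -1 * q.2 + 1)); split.
  apply: within_continuous_reparam cH _ => -[x t] [/= Ux]; rewrite !unitIE.
  by move=> /andP[t0 t1]; split => //; apply/andP; split; lra.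
move=> x Ux; have [H0 H1] := Hfg x Ux.
by rewrite /= mulr0 add0r mulr1 addNr.
Qed.

Lemma homotopic_on_trans U f g h :
  homotopic_on U f g -> homotopic_on U g h -> homotopic_on U f h.
Proof.
move=> [H1 [c1 e1]] [H2 [c2 e2]].
exists (fun q => if q.2 <= 2^-1 then H1 (q.1, 2 * q.2 + 0)
                else H2 (q.1, 2 * q.2 + -1)).
split; last first.
  move=> x Ux; have [H10 _] := e1 x Ux; have [_ H21] := e2 x Ux.
  have -> : (1 <= 2^-1 :> R) = false by apply/negbTE; rewrite -ltNge; lra.
  have -> : (0 <= 2^-1 :> R) by lra.
  have -> : 2 * 1 + -1 = 1 :> R by lra.
  by rewrite /= mulr0 addr0.
apply: (within_continuous_closed_cover (closed_snd_le (c := 2^-1))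
                                      (closed_snd_ge (c := 2^-1))).
- by move=> q _; case: (lerP q.2 2^-1) => hq; [left|right; exact: ltW].
- apply: (subspace_eq_continuous (f := from_subspace _ (fun q => H1 (q.1, 2 * q.2 + 0)))).
    by move=> q; rewrite inE /from_subspace /= => -[_ ->].
  apply: within_continuous_reparam c1 _ => -[x t] [[/= Ux]]; rewrite !unitIE.
  by move=> /andP[t0 t1] th; split => //; apply/andP; split; lra.
- apply: (subspace_eq_continuous (f := from_subspace _ (fun q => H2 (q.1, 2 * q.2 + -1)))).
    move=> q; rewrite inE /from_subspace /= => -[[Uq _] hq]; case: ifPn => // hq'.
    (* at the junction q.2 = 1/2 both halves take the value g q.1 *)
    have -> : 2 * q.2 + 0 = 1 by lra.
    have -> : 2 * q.2 + -1 = 0 by lra.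
    by have [-> _] := e2 _ Uq; have [_ ->] := e1 _ Uq.
  apply: within_continuous_reparam c2 _ => -[x t] [[/= Ux]]; rewrite !unitIE.
  by move=> /andP[t0 t1] th; split => //; apply/andP; split; lra.
Qed.

Lemma homotopic_on_cst U (p : R -> Y) :
  {within unitI, continuous p} -> homotopic_on U (fun=> p 0) (fun=> p 1).
Proof.
move=> cp; exists (fun q => p q.2); split => //.
apply: (within_continuous_comp_mapsto (k := snd) (S' := unitI)) => //.
  exact/continuous_subspaceT/continuous_snd.
by move=> [x t] [].
Qed.

End Homotopy.

Lemma homotopic_on_comp {X X' Y : topologicalType} (V : set X) (U : set X')
    (k : X' -> X) (f g : X -> Y) :
  continuous k -> (forall x, U x -> V (k x)) ->
  homotopic_on V f g -> homotopic_on U (f \o k) (g \o k).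
Proof.
move=> ck kU [H [cH Hfg]]; exists (fun q => H (k q.1, q.2)); split.
  apply: (within_continuous_comp_mapsto (k := fun q => (k q.1, q.2))
                                        (S' := V `*` unitI)) => //.
    by apply: continuous_subspaceT; exact: continuous_map_fst.
  by move=> [x t] [/= Ux It]; split => //; exact: kU.
by move=> x Ux; exact: Hfg _ (kU _ Ux).
Qed.

Lemma homotopic_on_fiberwise {X Z W : topologicalType} (U : set X)
    (m : X * Z -> W) (a b : X -> Z) :
  continuous m -> homotopic_on U a b ->
  homotopic_on U (fun x => m (x, a x)) (fun x => m (x, b x)).
Proof.
move=> cm [H [cH Hab]]; exists (fun q => m (q.1, H q)); split.
  have cpair : continuous (fun q : subspace (U `*` unitI) => (q.1, H q)).
    by apply: continuous_pair => //; exact/continuous_subspaceT/continuous_fst.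
  by move=> q; exact: continuous_comp (cpair q) (cm _).
by move=> x Ux; case: (Hab x Ux) => -> ->.
Qed.

Lemma homotopic_on_cst_preimage {X G : topologicalType} (phi : X -> G)
    (V : set G) (y : G) :
  path_connected G -> continuous phi -> incl_nullhomotopic V ->
  homotopic_on (phi @^-1` V) phi (fun=> y).
Proof.
move=> [_ pcG] cphi [c nullV]; have [p [cp [p0 p1]]] := pcG c y; subst c y.
apply: homotopic_on_trans (homotopic_on_comp cphi (fun _ Vx => Vx) nullV) _.
exact: homotopic_on_cst.
Qed.

Lemma least_ext_mono (P Q : nat -> Prop) :
  (forall n, Q n -> P n) -> ole (least_ext P) (least_ext Q).
Proof.
move=> QP; rewrite /least_ext.
case: (pselect (exists n, Q n)) => [exQ|_]; last by case: pselect.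
case: pselect => [exP|[]]; last by case: exQ => n /QP Pn; exists n.
case: ex_minnP => n _ minP; case: ex_minnP => m /asboolP Qm _.
by apply: minP; apply/asboolP; exact: QP.
Qed.

Section HSpace.
Variables (G : topologicalType) (mu delta : G * G -> G) (x0 : G).
Hypothesis HG : is_Hspace mu delta x0.

Lemma homotopic_on_of_division_cst {X : topologicalType} (W : set X)
    (f g : X -> G) :
  continuous f -> continuous g ->
  homotopic_on W (fun x => delta (f x, g x)) (fun=> x0) -> homotopic_on W f g.
Proof.
case: HG => cmu [_ [mu_delta mu_x0]] cf cg null_fg.
have mu_f : homotopic_on W (fun x => mu (f x, x0)) f.
  exact: (homotopic_on_comp (V := setT) cf (fun _ _ => I) mu_x0).
have mu_delta_fg : homotopic_on W (fun x => mu (f x, delta (f x, g x))) g.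
  exact: (homotopic_on_comp (V := setT) (continuous_pair cf cg) (fun _ _ => I)
                            mu_delta).
have cmuf : continuous (fun q : X * G => mu (f q.1, q.2)).
  by move=> q; apply: continuous_comp (cmu _); exact: continuous_map_fst.
have := homotopic_on_fiberwise cmuf null_fg => /= /homotopic_on_sym mu_f_delta.
apply: homotopic_on_trans (homotopic_on_sym mu_f) _.
exact: homotopic_on_trans mu_f_delta mu_delta_fg.
Qed.

Lemma hdist_le_of_cat_le {X : topologicalType} (f g : X -> G) (n : nat) :
  path_connected G -> continuous f -> continuous g ->
  cat_le G n -> hdist_le f g n.
Proof.
move=> pcG cf cg [U [oU [covU nullU]]].
pose phi x := delta (f x, g x).
have cphi : continuous phi.
  by move=> x; apply: continuous_comp (HG.2.1 _); exact: continuous_pair.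
exists (fun j => phi @^-1` U j); split; [|split].
- by move=> j jn; exact: (continuousP phi).1 cphi _ (oU j jn).
- by move=> x; case: (covU (phi x)) => j jn Ujx; exists j.
move=> j /nullU nullUj; apply: homotopic_on_of_division_cst => //.
exact: homotopic_on_cst_preimage.
Qed.

End HSpace.

Theorem theorem4p1 (G : topologicalType) (mu delta : (G * G)%type -> G) (x0 : G)
  (f g : (G * G)%type -> G) :
  path_connected G -> is_Hspace mu delta x0 ->
  continuous f -> continuous g ->
  ole (hdist f g) (LScat G).
Proof.
move=> pcG HG cf cg; apply: least_ext_mono => n.
exact: (hdist_le_of_cat_le HG pcG cf cg).
Qed.
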